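(* Let $F:\mathbb{R}^n\rightrightarrows\mathbb{R}^n$ be a set-valued map, consider the differential inclusion $\dot x\in F(x)$, $x\in\mathbb{R}^n$, and let $X_o,X_u\subset\mathbb{R}^n$. If there exists a lower semicontinuous time-varying barrier function candidate $B:\mathbb{R}_{\geq 0}\times\mathbb{R}^n\to\mathbb{R}$ for safety with respect to $(X_o,X_u)$ that satisfies property $(\star\star)$, then the system $\dot x\in F(x)$ is safe with respect to $(X_o,X_u)$.
   Context: A solution of $\dot x\in F(x)$ starting from $x_o$ is a locally absolutely continuous function $\phi:\operatorname{dom}\phi\to\mathbb{R}^n$, where $\operatorname{dom}\phi$ is $[0,T]$ or $[0,T)$ for some $T\in[0,\infty]$, with $\phi(0)=x_o$ and $\dot\phi(t)\in F(\phi(t))$ for almost all $t\in\operatorname{dom}\phi$. The system is safe with respect to $(X_o,X_u)$ if every solution $\phi$ starting from any $x_o\in X_o$ satisfies $\phi(t)\notin X_u$ for all $t\in\operatorname{dom}\phi$. A time-varying barrier function candidate for safety with respect to $(X_o,X_u)$ is a function $B:\mathbb{R}_{\geq0}\times\mathbb{R}^n\to\mathbb{R}$ with $B(t,x)>0$ for all $(t,x)\in\mathbb{R}_{\geq0}\times X_u$ and $B(t,x)\le 0$ for all $(t,x)\in\mathbb{R}_{\geq0}\times X_o$. Let $K:=\{(t,x)\in\mathbb{R}_{\geq0}\times\mathbb{R}^n: B(t,x)\le 0\}$, with interior $\operatorname{int}(K)$ taken in $\mathbb{R}_{\geq0}\times\mathbb{R}^n$. Property $(\star\star)$: there is an open neighborhood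 $U(K)$ of $K$ such that, along each solution of $\dot x\in F(x)$ considered in the extended time–state space (i.e., along each solution of $(\dot t,\dot x)\in\{1\}\times F(x)$) starting from a point of $U(K)\setminus\operatorname{int}(K)$ and remaining in $U(K)\setminus\operatorname{int}(K)$ on a time interval, the map $t\mapsto B(t,\phi(t))$ is nonincreasing on that interval. *)

From HB Require Import structures.
From mathcomp Require Import all_boot all_order all_algebra.
From mathcomp Require Import all_classical all_reals all_analysis.
Set Implicit Arguments. Unset Strict Implicit. Unset Printing Implicit Defensive.
Import Order.TTheory GRing.Theory Num.Theory.
Import numFieldNormedType.Exports.
Local Open Scope classical_set_scope.
Local Open Scope ring_scope.

Section Defs.
Variables (R : realType) (n : nat).
Notation V := 'rV[R]_n.

Definition abs_cont_on (f : R -> V) (a b : R) : Prop :=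
  forall eps : R, 0 < eps -> exists2 delta : R, 0 < delta &
    forall (k : nat) (u v : nat -> R),
      (forall i, (i < k)%N -> a <= u i /\ u i <= v i /\ v i <= b) ->
      (forall i j, (i < k)%N -> (j < k)%N -> i <> j -> v i <= u j \/ v j <= u i) ->
      \sum_(i < k) (v i - u i) < delta ->
      \sum_(i < k) `| f (v i) - f (u i) | < eps.

Definition loc_abs_cont (f : R -> V) (D : set R) : Prop :=
  forall a b, a <= b -> [set` `[a, b]] `<=` D -> abs_cont_on f a b.

Definition sol_domain (D : set R) : Prop :=
  (exists T : R, 0 <= T /\ (D = [set` `[0, T]] \/ D = [set` `[0, T[])) \/ D = [set` `[0, +oo[].

(* phi : dom -> R^n is a solution of xdot in F(x) starting from x0;
   phi is given as a total function, only its values on dom matter. *)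
Definition is_solution (F : V -> set V) (x0 : V) (phi : R -> V) (dom : set R)
  : Prop :=
  [/\ sol_domain dom, loc_abs_cont phi dom, phi 0 = x0 &
      exists N : set R, (@lebesgue_measure R).-negligible N /\
        forall t, dom t -> ~ N t -> derivable phi t 1 /\ F (phi t) ('D_1 phi t)].

Definition safe (F : V -> set V) (Xo Xu : set V) : Prop :=
  forall x0 phi dom, Xo x0 -> is_solution F x0 phi dom ->
    forall t, dom t -> ~ Xu (phi t).

Definition barrier_candidate (B : R -> V -> R) (Xo Xu : set V) : Prop :=
  (forall t x, 0 <= t -> Xu x -> 0 < B t x) /\
  (forall t x, 0 <= t -> Xo x -> B t x <= 0).

(* the ambient space R_{>=0} x R^n (subset of R x R^n, subspace topology) *)
Definition Hspace : set (R * V) := [set p | 0 <= p.1].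

Definition lsc_on_H (B : R -> V -> R) : Prop :=
  forall p : R * V, Hspace p -> forall a : R, a < B p.1 p.2 ->
    exists2 W : set (R * V), nbhs p W &
      forall q, W q -> Hspace q -> a < B q.1 q.2.

Definition Kset (B : R -> V -> R) : set (R * V) :=
  [set p | Hspace p /\ B p.1 p.2 <= 0].

Definition rel_interior (A : set (R * V)) : set (R * V) :=
  [set p | A p /\ Hspace p /\
           exists2 W : set (R * V), nbhs p W & W `&` Hspace `<=` A].

Definition rel_open (U : set (R * V)) : Prop :=
  exists2 O : set (R * V), open O & U = O `&` Hspace.

Definition property_star_star (F : V -> set V) (B : R -> V -> R) : Prop :=
  exists2 U : set (R * V), rel_open U & (Kset B `<=` U /\
    forall (t0 : R) (x0 : V) (phi : R -> V) (dom : set R),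
      (U `\` rel_interior (Kset B)) (t0, x0) ->
      is_solution F x0 phi dom ->
      forall s1 : R, 0 <= s1 -> [set` `[0, s1]] `<=` dom ->
        (forall s, 0 <= s <= s1 ->
           (U `\` rel_interior (Kset B)) (t0 + s, phi s)) ->
        forall s s', 0 <= s -> s <= s' -> s' <= s1 ->
          B (t0 + s') (phi s') <= B (t0 + s) (phi s)).

End Defs.

(* Suppose a solution phi starting in X_o reaches X_u at time t1, so that
   t |-> B(t, phi t) is <= 0 at 0 and > 0 at t1.  Let tau be the supremum of
   the times in [0, t1] where it is <= 0.  Lower semicontinuity of B gives
   B(tau, phi tau) <= 0, and B > 0 on (tau, t1], so (tau, phi tau) is a point
   of K outside int(K).  As U is open, the graph of phi stays in
   U \ int(K) on a short window [tau, tau + del]; property (**), applied to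
   the solution restarted at time tau, then forces
   B(tau + del, phi(tau + del)) <= B(tau, phi tau) <= 0, a contradiction. *)

From HB Require Import structures.
From mathcomp Require Import all_boot all_order all_algebra.
From mathcomp Require Import all_classical all_reals all_analysis.
From mathcomp Require Import measurable_realfun lra.
Import Order.TTheory GRing.Theory Num.Theory.
Import numFieldNormedType.Exports.
Set Implicit Arguments. Unset Strict Implicit. Unset Printing Implicit Defensive.
Local Open Scope classical_set_scope.
Local Open Scope ring_scope.

Section lebesgue_translation.
Context {R : realType}.
Local Notation mu := (@lebesgue_measure R).

Lemma add_preimage_itvbndbnd (c : R) ba a bb b :
  +%R c @^-1` [set` Interval (BSide ba a) (BSide bb b)] =
  [set` Interval (BSide ba (a - c)) (BSide bb (b - c))].
Proof. by apply/seteqP; split => x /=; rewrite !in_itv /= lteifBlDl lteifBrDl. Qed.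

Lemma measurable_addl (c : R) :
  measurable_fun [set: measurableTypeR R] (+%R c : _ -> measurableTypeR R).
Proof. by apply: measurable_funD => //; exact: measurable_cst. Qed.

Lemma lebesgue_measure_shift (c : R) (A : set R) : measurable A ->
  pushforward mu (+%R c : _ -> measurableTypeR R) A = mu A.
Proof.
move=> mA; apply/esym/lebesgue_measure_unique => //; first exact: measurable_addl.
move=> mf _ [[a b] _ <-]; rewrite /= /pushforward add_preimage_itvbndbnd.
rewrite !lebesgue_measure_itv /= !lte_fin ltrD2r; case: ifP => // _.
by congr (_%:E); lra.
Qed.

Lemma negligible_shift (c : R) (N : set R) :
  mu.-negligible N -> mu.-negligible (+%R c @^-1` N).
Proof.
move=> [A [mA A0 NA]]; exists (+%R c @^-1` A); split.
- by rewrite -[X in measurable X]setTI; exact: measurable_addl.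
- rewrite -[LHS]/(pushforward mu (+%R c : _ -> measurableTypeR R) A).
  by rewrite lebesgue_measure_shift.
- by move=> s /NA.
Qed.

End lebesgue_translation.

Section derivative_shift.
Context {R : realType} {V : normedModType R}.
Variables (f : R -> V) (c x v : R).

Let diff_quotient_shift :
  (fun h : R => h^-1 *: (((fun s => f (c + s)) \o shift x) (h *: v) - f (c + x))) =
  (fun h : R => h^-1 *: ((f \o shift (c + x)) (h *: v) - f (c + x))).
Proof. by apply/funext => h /=; rewrite addrCA. Qed.

Lemma derivable_shift :
  derivable f (c + x) v -> derivable (fun s => f (c + s)) x v.
Proof. by rewrite /derivable diff_quotient_shift. Qed.

Lemma derive_shift : 'D_v (fun s => f (c + s)) x = 'D_v f (c + x).
Proof. by rewrite /derive diff_quotient_shift. Qed.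

End derivative_shift.

Section absolute_continuity.
Context {R : realType} {n : nat}.
Implicit Types (f : R -> 'rV[R]_n) (a b c : R).

Lemma abs_cont_on_shift f a b c :
  abs_cont_on f (c + a) (c + b) -> abs_cont_on (fun s => f (c + s)) a b.
Proof.
move=> acf e e_gt0; have [d d_gt0 fd] := acf e e_gt0.
exists d => // k u v uv_in uv_disj uv_sum.
apply: (fd k (fun i => c + u i) (fun i => c + v i)).
- by move=> i ik; have [? [? ?]] := uv_in i ik; rewrite !lerD2l.
- by move=> i j ik jk ij; rewrite !lerD2l; exact: uv_disj.
- by under eq_bigr do rewrite opprD addrACA subrr add0r.
Qed.

Lemma abs_cont_on_continuous f a b : abs_cont_on f a b ->
  forall s, a <= s <= b -> forall e, 0 < e -> exists2 d, 0 < d &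
    forall s', a <= s' <= b -> `|s' - s| < d -> `|f s' - f s| < e.
Proof.
move=> acf s /andP[a_s s_b] e e_gt0; have [d d_gt0 fd] := acf e e_gt0.
have fd1 u v : a <= u -> u <= v -> v <= b -> v - u < d -> `|f v - f u| < e.
  move=> au uv vb vud; have := fd 1%N (fun _ => u) (fun _ => v).
  rewrite !big_ord1; apply => // i j; rewrite !ltnS !leqn0 => /eqP-> /eqP-> //.
exists d => // s' /andP[a_s' s'_b]; have [s_s'|s'_s] := leP s s'.
- by rewrite ger0_norm ?subr_ge0 //; exact: fd1.
- rewrite distrC [`|f s' - f s|]distrC ger0_norm ?subr_ge0 ?ltW //.
  by apply: fd1 => //; exact: ltW.
Qed.

Lemma abs_cont_on_graph_nbhs f a b tau (W : set (R * 'rV[R]_n)) :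
  abs_cont_on f a b -> a <= tau <= b -> nbhs (tau, f tau) W ->
  exists2 d, 0 < d & forall s, a <= s <= b -> `|s - tau| < d -> W (s, f s).
Proof.
move=> acf tau_ab /nbhs_ballP[e e_gt0 eW].
have [d d_gt0 fd] := abs_cont_on_continuous acf tau_ab e_gt0.
exists (Num.min e d); first by rewrite lt_min e_gt0 d_gt0.
move=> s s_ab; rewrite lt_min => /andP[s_e s_d]; apply: eW.
by split; rewrite -ball_normE /ball_ /= distrC //; exact: fd.
Qed.

Lemma abs_cont_on_graph_window f a b tau (W : set (R * 'rV[R]_n)) :
  abs_cont_on f a b -> a <= tau < b -> nbhs (tau, f tau) W ->
  exists2 del, 0 < del &
    tau + del <= b /\ forall s, 0 <= s <= del -> W (tau + s, f (tau + s)).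
Proof.
move=> acf /andP[a_tau tau_b] /(abs_cont_on_graph_nbhs acf) [|d d_gt0 dW].
  by rewrite a_tau ltW.
pose del := Num.min (d / 2) (b - tau).
have del_d : del <= d / 2 by rewrite ge_min lexx.
have del_b : del <= b - tau by rewrite ge_min lexx orbT.
exists del; first by rewrite lt_min; apply/andP; split; lra.
split=> [|s /andP[s_ge0 s_del]]; first lra.
apply: dW; first by apply/andP; split; lra.
by rewrite addrAC subrr add0r ger0_norm //; lra.
Qed.

End absolute_continuity.

Section solutions.
Context {R : realType} {n : nat}.

Lemma sol_domain_itvcc (dom : set R) (t : R) : sol_domain dom -> dom t ->
  0 <= t /\ [set` `[0, t]] `<=` dom.
Proof.
move=> [[T [T_ge0 [->|->]]]|->] /=; rewrite !in_itv /= ?andbT.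
- move=> /andP[t_ge0 t_T]; split=> // s /=; rewrite !in_itv /= => /andP[-> s_t].
  exact: le_trans s_t t_T.
- move=> /andP[t_ge0 t_T]; split=> // s /=; rewrite !in_itv /= => /andP[-> s_t].
  exact: le_lt_trans s_t t_T.
- by move=> t_ge0; split=> // s /=; rewrite !in_itv /= andbT => /andP[].
Qed.

Lemma is_solution_shift (F : 'rV[R]_n -> set 'rV[R]_n) x0 phi dom (tau del : R) :
  is_solution F x0 phi dom -> 0 <= tau -> 0 <= del -> dom (tau + del) ->
  is_solution F (phi tau) (fun s => phi (tau + s)) [set` `[0, del]].
Proof.
move=> [sd lac _ [N [negN derN]]] tau_ge0 del_ge0 /(sol_domain_itvcc sd)[_ sub].
have in_dom s : 0 <= s <= del -> dom (tau + s).
  by move=> /andP[s_ge0 s_del]; apply: sub; rewrite /= in_itv /=; apply/andP; split; lra.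
split.
- by left; exists del; split => //; left.
- move=> a b ab sub_ab; apply: abs_cont_on_shift; apply: lac; first by rewrite lerD2l.
  have /andP[a_ge0 _] : 0 <= a <= del by have := sub_ab a; rewrite /= !in_itv /= lexx ab; apply.
  have /andP[_ b_del] : 0 <= b <= del by have := sub_ab b; rewrite /= !in_itv /= lexx ab; apply.
  move=> s /=; rewrite in_itv /= => /andP[s_a s_b]; apply: sub; rewrite /= in_itv /=.
  by apply/andP; split; lra.
- by rewrite addr0.
- exists (+%R tau @^-1` N); split; first exact: negligible_shift.
  move=> s /=; rewrite in_itv /= => s_del Ns; have [phi_der phi_F] := derN _ (in_dom s s_del) Ns.
  by split; [exact: derivable_shift | rewrite derive_shift].
Qed.

End solutions.

Section exit_time.
Context {R : realType} {n : nat}.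
Variables (B : R -> 'rV[R]_n -> R) (phi : R -> 'rV[R]_n) (t1 : R).
Hypotheses (lscB : lsc_on_H B) (ac_phi : abs_cont_on phi 0 t1) (t1_ge0 : 0 <= t1)
  (B0 : B 0 (phi 0) <= 0) (Bt1 : 0 < B t1 (phi t1)).

Let S := [set s | 0 <= s <= t1 /\ B s (phi s) <= 0].
Let tau := sup S.

Let S0 : S 0. Proof. by split; rewrite ?lexx ?t1_ge0. Qed.

Let has_sup_S : has_sup S.
Proof. by split; [exists 0 | exists t1 => s [/andP[_ ?] _]]. Qed.

Let tau_ge0 : 0 <= tau. Proof. exact: sup_upper_bound. Qed.

Let tau_le_t1 : tau <= t1.
Proof. by apply: ge_sup; [exists 0 | move=> s [/andP[_ ?] _]]. Qed.

Let B_gt0_after s : tau < s <= t1 -> 0 < B s (phi s).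
Proof.
move=> /andP[tau_s s_t1]; rewrite ltNge; apply/negP => Bs.
have : s <= tau.
  apply: sup_upper_bound => //; split=> //; apply/andP; split=> //.
  exact: le_trans tau_ge0 (ltW tau_s).
lra.
Qed.

Let tau_in : 0 <= tau <= t1. Proof. by rewrite tau_ge0 tau_le_t1. Qed.

Let B_tau_le0 : B tau (phi tau) <= 0.
Proof.
rewrite leNgt; apply/negP => Btau_gt0.
have [W W_tau BW] := lscB (p:=(tau, phi tau)) tau_ge0 Btau_gt0.
have [d d_gt0 dW] := abs_cont_on_graph_nbhs ac_phi tau_in W_tau.
have [s [/andP[s_ge0 s_t1] Bs] tau_d_s] := sup_adherent d_gt0 has_sup_S.
have s_tau : s <= tau by apply: sup_upper_bound => //; split=> //; apply/andP.
suff : 0 < B s (phi s) by rewrite ltNge Bs.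
apply: (BW (s, phi s)) => //; apply: dW; first by apply/andP.
by rewrite distrC ger0_norm ?subr_ge0 //; move: tau_d_s; rewrite -/tau; lra.
Qed.

Let tau_lt_t1 : tau < t1.
Proof.
by rewrite lt_neqAle tau_le_t1 andbT; apply: contraTneq B_tau_le0 => ->; rewrite -ltNge.
Qed.

Let tau_not_interior : ~ rel_interior (Kset B) (tau, phi tau).
Proof.
move=> [_ [_ [W W_tau WK]]].
have [|del del_gt0 [del_t1 delW]] := abs_cont_on_graph_window ac_phi _ W_tau.
  by rewrite tau_ge0 tau_lt_t1.
have [_ /=] : Kset B (tau + del, phi (tau + del)).
  apply: WK; split; first by apply: delW; rewrite lexx andbT ltW.
  exact: addr_ge0 tau_ge0 (ltW del_gt0).
by apply/negP; rewrite -ltNge; apply: B_gt0_after; rewrite ltrDl del_gt0.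
Qed.

Lemma exists_exit_from_Kset : exists tau, [/\ 0 <= tau < t1,
  Kset B (tau, phi tau), ~ rel_interior (Kset B) (tau, phi tau) &
  forall s, tau < s <= t1 -> 0 < B s (phi s)].
Proof. by exists tau; split; rewrite ?tau_ge0 ?tau_lt_t1. Qed.

Lemma boundary_layer_increase (U : set (R * 'rV[R]_n)) :
  rel_open U -> Kset B `<=` U ->
  exists t0 del, [/\ 0 <= t0, 0 < del, t0 + del <= t1,
    forall s, 0 <= s <= del ->
      (U `\` rel_interior (Kset B)) (t0 + s, phi (t0 + s)) &
    B t0 (phi t0) < B (t0 + del) (phi (t0 + del))].
Proof.
move=> [Uo Uo_open UE] KU.
have [t0 [/andP[t0_ge0 t0_t1] K_t0 not_int B_after]] := exists_exit_from_Kset.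
have Uo_t0 : Uo (t0, phi t0) by have := KU _ K_t0; rewrite UE => -[].
have [|del del_gt0 [del_t1 delUo]] :=
  abs_cont_on_graph_window ac_phi _ (open_nbhs_nbhs (conj Uo_open Uo_t0)).
  by rewrite t0_ge0 t0_t1.
have B_after_t0 s : 0 < s <= del -> 0 < B (t0 + s) (phi (t0 + s)).
  by move=> /andP[s_gt0 s_del]; apply: B_after; apply/andP; split; lra.
exists t0, del; split => //.
- move=> s /andP[s_ge0 s_del]; have [s_gt0|s_le0] := ltrP 0 s; last first.
    have -> : s = 0 by lra.
    by rewrite addr0; split=> //; exact: KU.
  split; first by rewrite UE; split; [apply: delUo; apply/andP | rewrite /Hspace /=; lra].
  by move=> [[_ /= Bs] _]; have := B_after_t0 s; rewrite s_gt0 s_del => /(_ isT); lra.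
- have [_ /= B_t0] := K_t0.
  by have := B_after_t0 del; rewrite del_gt0 lexx => /(_ isT); lra.
Qed.

End exit_time.

Theorem theorem1 (R : realType) (n : nat) (F : 'rV[R]_n -> set 'rV[R]_n)
    (Xo Xu : set 'rV[R]_n) :
  (exists B : R -> 'rV[R]_n -> R,
     [/\ lsc_on_H B, barrier_candidate B Xo Xu & property_star_star F B]) ->
  safe F Xo Xu.
Proof.
move=> [B [lscB [B_Xu B_Xo] [U U_open [KU star_star]]]].
move=> x0 phi dom Xo_x0 sol t1 dom_t1 Xu_t1.
have [sd lac phi0 _] := sol.
have [t1_ge0 sub_dom] := sol_domain_itvcc sd dom_t1.
have B0 : B 0 (phi 0) <= 0 by rewrite phi0; exact: B_Xo.
have [tau [del [tau_ge0 del_gt0 del_t1 layer B_incr]]] :=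
  boundary_layer_increase lscB (lac 0 t1 t1_ge0 sub_dom) t1_ge0 B0
    (B_Xu _ _ t1_ge0 Xu_t1) U_open KU.
have layer0 : (U `\` rel_interior (Kset B)) (tau, phi tau).
  by have := layer 0; rewrite lexx (ltW del_gt0) addr0; apply.
have dom_end : dom (tau + del).
  by apply: sub_dom; rewrite /= in_itv /= del_t1 andbT addr_ge0 // ltW.
have psi_sol := is_solution_shift sol tau_ge0 (ltW del_gt0) dom_end.
have := star_star _ _ _ _ layer0 psi_sol del (ltW del_gt0) (@subset_refl _ _)
  layer 0 del (lexx 0) (ltW del_gt0) (lexx del).
by rewrite addr0 leNgt B_incr.
Qed.
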